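(* Let $\Gamma$ be a strictly positive definite, irreducible $n\times n$ covariance matrix such that $\Gamma^{-1}$ is an $M$-matrix, and for $t>0$ let $Q(t)=[I+(t\Gamma)^{-1}]^{-1}=I-(I+t\Gamma)^{-1}$. Then for all $t$ sufficiently large, every entry of $Q(t)$ is strictly positive.
   Context: A non-singular matrix $A$ is an $M$-matrix if all entries of $A^{-1}$ are non-negative and $A_{i,j}\le 0$ for all $i\ne j$. A symmetric matrix is irreducible if it cannot be written as a direct sum of square matrices. *)

From HB Require Import structures.
From mathcomp Require Import all_boot all_order all_algebra.
From mathcomp Require Import reals.
Set Implicit Arguments. Unset Strict Implicit. Unset Printing Implicit Defensive.
Import Order.TTheory GRing.Theory Num.Theory.
Local Open Scope ring_scope.

Definition pos_def_sym (R : realType) (n : nat) (A : 'M[R]_n) : Prop :=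
  A^T = A /\ (forall x : 'cV[R]_n, x != 0 -> 0 < (x^T *m A *m x) 0 0).

(* Irreducible: A cannot be written (after a simultaneous permutation of
   rows and columns) as a direct sum of two square blocks, i.e. there is
   no proper nonempty index set S with A i j = 0 for i in S, j not in S. *)
Definition irreducible_mx (R : realType) (n : nat) (A : 'M[R]_n) : Prop :=
  ~ (exists S : {set 'I_n}, [/\ S != set0, S != setT &
       forall i j, i \in S -> j \notin S -> A i j = 0]).

Definition M_matrix (R : realType) (n : nat) (A : 'M[R]_n) : Prop :=
  [/\ A \in unitmx, (forall i j, 0 <= invmx A i j) &
      (forall i j, i != j -> A i j <= 0)].

Definition Qmx (R : realType) (n : nat) (G : 'M[R]_n) (t : R) : 'M[R]_n :=
  invmx (1%:M + invmx (t *: G)).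

From HB Require Import structures.
From mathcomp Require Import all_boot all_order all_algebra.
From mathcomp Require Import reals.
From mathcomp Require Import lra.

Set Implicit Arguments.
Unset Strict Implicit.
Unset Printing Implicit Defensive.
Import Order.TTheory GRing.Theory Num.Theory.
Local Open Scope ring_scope.

(* In fact Q(t) > 0 for every t > 0.  Put s = 1/t and A = Gamma^-1, so that
   Q(t) = (I + s A)^-1.  The vector w = Gamma 1 is positive and A w = 1, so
   the Z-matrix I + s A obeys a minimum principle: (I + s A) x >= 0 forces
   x >= 0, whence Q(t) >= 0.  If the column j of Q(t) vanished at some k,
   the equations (I + s A) Q = I would make the zero set of that column a
   proper set of indices closed under A; since A is positive definite, its
   inverse Gamma would then split along the same set, contradicting
   irreducibility. *)

Section PositiveDefinite.

Variables (R : realFieldType) (n : nat).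
Implicit Types (A B : 'M[R]_n) (S : {set 'I_n}).

Definition posdef A := forall x : 'cV[R]_n, x != 0 -> 0 < (x^T *m A *m x) 0 0.

Definition closed_mx A S := forall i j, i \in S -> j \notin S -> A i j = 0.

Lemma quadformE A (x : 'cV[R]_n) :
  (x^T *m A *m x) 0 0 = \sum_i x i 0 * (A *m x) i 0.
Proof. by rewrite -mulmxA mxE; apply: eq_bigr => i _; rewrite mxE. Qed.

Lemma posdef_diag_gt0 A k : posdef A -> 0 < A k k.
Proof.
move=> pdA; have ek_neq0 : (delta_mx k 0 : 'cV[R]_n) != 0.
  by apply/eqP => /matrixP/(_ k 0); rewrite !mxE !eqxx => /eqP; rewrite oner_eq0.
by have := pdA _ ek_neq0; rewrite trmx_delta -rowE -colE !mxE.
Qed.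

Lemma posdef_unitmx A : posdef A -> A \in unitmx.
Proof.
move=> pdA; rewrite -row_free_unit -kermx_eq0.
apply/eqP/row_matrixP => r; rewrite row0; set u := row r _.
have uA : u *m A = 0 by rewrite /u -row_mul mulmx_ker row0.
apply/eqP; apply: contraT => u_neq0.
have := pdA u^T; rewrite trmx_eq0 => /(_ u_neq0).
by rewrite trmxK uA mul0mx mxE ltxx.
Qed.

Lemma posdef_invmx A : A^T = A -> posdef A -> posdef (invmx A).
Proof.
move=> AT pdA x x_neq0; have Au := posdef_unitmx pdA.
set u := invmx A *m x.
have xE : x = A *m u by rewrite /u mulmxA mulmxV // mul1mx.
have u_neq0 : u != 0 by apply: contraNneq x_neq0 => u0; rewrite xE u0 mulmx0.
rewrite xE trmx_mul AT -mulmxA (mulmxA (invmx A)) mulVmx // mul1mx.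
exact: pdA.
Qed.

Lemma posdef_1D A s : posdef A -> 0 < s -> posdef (1%:M + s *: A).
Proof.
move=> pdA s_gt0 x x_neq0.
rewrite mulmxDr mulmxDl mulmx1 -scalemxAr -scalemxAl mxE [in X in _ + X]mxE.
have xx_ge0 : 0 <= (x^T *m x) 0 0.
  by rewrite mxE; apply: sumr_ge0 => k _; rewrite mxE -expr2 sqr_ge0.
by apply: ltr_wpDl xx_ge0 _; apply: mulr_gt0 => //; apply: pdA.
Qed.

(* The witness is the k-th column of B restricted to S: A kills it on S, and
   it vanishes off S, so its quadratic form for A is zero. *)
Lemma posdef_closed_inv A B S :
  posdef A -> A *m B = 1%:M -> closed_mx A S -> closed_mx B S.
Proof.
move=> pdA AB closedA i k iS kS.
pose v : 'cV[R]_n := \col_m (if m \in S then B m k else 0).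
have Av0 l : l \in S -> (A *m v) l 0 = 0.
  move=> lS; rewrite mxE; transitivity ((A *m B) l k).
    rewrite mxE; apply: eq_bigr => m _; rewrite mxE.
    by case: ifP => mS //; rewrite closedA ?mS // !mul0r.
  by rewrite AB mxE; case: eqP => // lk; rewrite -lk lS in kS.
suff /matrixP/(_ i 0) : v = 0 by rewrite !mxE iS.
apply/eqP; apply: contraT => v_neq0; have := pdA v v_neq0.
rewrite quadformE big1 ?ltxx // => m _.
have [mS|mS] := boolP (m \in S); first by rewrite Av0 ?mulr0.
by rewrite /v mxE (negbTE mS) mul0r.
Qed.

Lemma mulmx_const1_gt0 B k :
  (forall i j, 0 <= B i j) -> 0 < B k k -> 0 < (B *m (const_mx 1 : 'cV[R]_n)) k 0.
Proof.
move=> B_ge0 Bkk; rewrite mxE (bigD1 k) //= [const_mx 1 k 0]mxE mulr1.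
apply: ltr_wpDr Bkk; apply: sumr_ge0 => l _.
by rewrite mxE mulr1.
Qed.

End PositiveDefinite.

Section Resolvent.

Variables (R : realFieldType) (n : nat) (A : 'M[R]_n) (w : 'I_n -> R) (s : R).
Hypothesis offdiag_le0 : forall i j, i != j -> A i j <= 0.
Hypothesis w_gt0 : forall k, 0 < w k.
Hypothesis Aw_ge0 : forall i, 0 <= \sum_k A i k * w k.
Hypothesis s_gt0 : 0 < s.

(* Look at the index where x / w is smallest. *)
Lemma min_principle (x : 'I_n -> R) :
  (forall i, 0 <= x i + s * \sum_k A i k * x k) -> forall i, 0 <= x i.
Proof.
move=> sol_ge0 i0; case: (leP 0 (x i0)) => // xi0_lt0.
have [i _ min_i] := @arg_minP _ R 'I_n i0 predT (fun k => x k / w k) isT.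
set m := x i / w i in min_i *.
have m_lt0 : m < 0.
  by apply: le_lt_trans (min_i i0 isT) _; rewrite ltr_pdivrMr // mul0r.
have xiE : x i = m * w i by rewrite /m divfK // gt_eqF.
have Ax_le : \sum_k A i k * x k <= m * \sum_k A i k * w k.
  rewrite mulr_sumr; apply: ler_sum => k _; rewrite mulrCA.
  have [<-|ik] := eqVneq i k; first by rewrite xiE.
  by apply: ler_wnM2l; [exact: offdiag_le0 | rewrite -ler_pdivlMr // min_i].
have : s * \sum_k A i k * x k <= 0.
  apply: le_trans (_ : s * (m * \sum_k A i k * w k) <= 0).
    by rewrite ler_pM2l.
  by rewrite pmulr_rle0 // nmulr_rle0 // Aw_ge0.
have : m * w i < 0 by rewrite pmulr_llt0.
by have := sol_ge0 i; rewrite xiE; lra.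
Qed.

Hypothesis unit_1DA : 1%:M + s *: A \in unitmx.

Let Q := invmx (1%:M + s *: A).

Lemma resolventE i j : Q i j + s * \sum_k A i k * Q k j = (i == j)%:R.
Proof.
have : Q + s *: (A *m Q) = 1%:M.
  by rewrite scalemxAl -{1}(mul1mx Q) -mulmxDl mulmxV.
by move/matrixP/(_ i j); rewrite !mxE.
Qed.

Lemma resolvent_ge0 i j : 0 <= Q i j.
Proof.
by apply: (min_principle (x := fun k => Q k j)) => k; rewrite resolventE.
Qed.

(* On a zero k of column j, the equation for Q k j becomes a sum of
   nonpositive terms that must vanish. *)
Lemma resolvent_zero_set j :
  j \notin [set k | Q k j == 0] /\ closed_mx A [set k | Q k j == 0].
Proof.
have zero_row k : Q k j = 0 ->
    k != j /\ forall l, Q l j != 0 -> A k l = 0.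
  move=> Qkj0; have terms_le0 l : A k l * Q l j <= 0.
    have [<-|kl] := eqVneq k l; first by rewrite Qkj0 mulr0.
    exact: mulr_le0_ge0 (offdiag_le0 kl) (resolvent_ge0 l j).
  have sum_le0 : \sum_l A k l * Q l j <= 0.
    by rewrite -oppr_ge0 -sumrN; apply: sumr_ge0 => l _; rewrite oppr_ge0.
  have := resolventE k j; rewrite Qkj0 add0r.
  have [kj eq1|kj] := eqVneq k j.
    by move: sum_le0; rewrite -(pmulr_rle0 _ s_gt0) eq1 ler10.
  move/eqP; rewrite mulf_eq0 gt_eqF //= => /eqP sum0; split=> // l Qlj.
  have terms_ge0 l' : predT l' -> 0 <= - (A k l' * Q l' j) by rewrite oppr_ge0.
  have := @psumr_eq0P _ _ _ _ terms_ge0.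
  rewrite sumrN sum0 oppr0 => /(_ erefl l isT).
  by move/eqP; rewrite oppr_eq0 mulf_eq0 (negbTE Qlj) orbF => /eqP.
split; first by rewrite inE; apply/negP => /eqP /zero_row [/eqP].
move=> k l; rewrite !inE => /eqP Qkj /negP Qlj.
by apply: (zero_row k Qkj).2; apply/negP.
Qed.

End Resolvent.

Lemma irreducible_mx_posdef_inv (R : realType) (n : nat) (A B : 'M[R]_n) :
  posdef A -> A *m B = 1%:M -> irreducible_mx B -> irreducible_mx A.
Proof.
move=> pdA AB irrB [S [S0 ST closedA]]; apply: irrB.
by exists S; split=> //; apply: posdef_closed_inv closedA.
Qed.

Lemma resolvent_gt0 (R : realType) (n : nat) (A : 'M[R]_n) (w : 'I_n -> R) s :
  posdef A -> irreducible_mx A -> (forall i j, i != j -> A i j <= 0) ->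
  (forall k, 0 < w k) -> (forall i, 0 <= \sum_k A i k * w k) -> 0 < s ->
  forall i j, 0 < invmx (1%:M + s *: A) i j.
Proof.
move=> pdA irrA offdiag w_gt0 Aw_ge0 s_gt0 i j.
have unit_1DA := posdef_unitmx (posdef_1D pdA s_gt0).
have [jS closedS] := resolvent_zero_set offdiag w_gt0 Aw_ge0 s_gt0 unit_1DA j.
rewrite lt_def (resolvent_ge0 offdiag w_gt0 Aw_ge0 s_gt0) // andbT.
apply/negP => /eqP Qij0; apply: irrA.
exists [set k | invmx (1%:M + s *: A) k j == 0].
split=> //; first by apply/set0Pn; exists i; rewrite inE Qij0.
by apply: contraNneq jS => ->; rewrite inE.
Qed.

Theorem lemma1p7 (R : realType) (n : nat) (G : 'M[R]_n) :
  pos_def_sym G -> irreducible_mx G -> M_matrix (invmx G) ->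
  exists T : R, forall t : R, 0 < t -> T < t ->
    forall i j : 'I_n, 0 < Qmx G t i j.
Proof.
move=> [GT pdG] irrG [_ G_ge0 offdiag].
have Gu : G \in unitmx by apply: posdef_unitmx.
rewrite invmxK in G_ge0.
have AG : invmx G *m G = 1%:M by rewrite mulVmx.
have pdA : posdef (invmx G) := posdef_invmx GT pdG.
pose w (k : 'I_n) := (G *m (const_mx 1 : 'cV[R]_n)) k 0.
have w_gt0 k : 0 < w k by apply: mulmx_const1_gt0 => //; apply: posdef_diag_gt0.
have Aw1 i : \sum_k invmx G i k * w k = 1.
  have : invmx G *m (G *m const_mx 1) = const_mx 1 :> 'cV[R]_n.
    by rewrite mulmxA AG mul1mx.
  by move/matrixP/(_ i 0); rewrite !mxE.
exists 0 => t t_gt0 _ i j.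
rewrite /Qmx invmxZ ?unitmxZ ?unitfE ?gt_eqF //.
apply: (resolvent_gt0 pdA _ offdiag w_gt0); rewrite ?invr_gt0 //.
- exact: irreducible_mx_posdef_inv irrG.
- by move=> k; rewrite Aw1.
Qed.
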